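(* Fix a vocabulary $(Pred, Cons, Var)$ and a natural number $k$. The following formulas are valid with respect to the class of all $k$-sight models: (1) $\mathsf{D}^k z t \to K_z t$, for every variable $z\in\{x,y\}$ and every term $t$; (2) $(K_z\mathcal{T}\land P(t_1,t_2,\ldots,t_m))\to K_z P(t_1,t_2,\ldots,t_m)$, for every $z\in\{x,y\}$, every $m$-ary $P\in Pred$ and every set of terms $\mathcal{T}$ with $\{t_1,\ldots,t_m\}\subseteq \mathcal{T}$.
   Context: Vocabulary: $Pred$ is a set of predicate symbols with arities containing a binary symbol $R$; $Cons$ is a nonempty finite set of constants; $Var=\{x,y\}$. Terms are elements of $\mathsf{Term}=Cons\cup Var$. Formulas are built from atoms $P(t_1,\dots,t_m)$ and $t_1\equiv t_2$ ($t_i$ terms) using $\neg,\land$, the operators $K_z t$ (''$z$ knows the value of $t$''), $K_z\varphi$ and $[z]\varphi$ for $z\in Var$ (only the static part is needed here). For a set $\mathcal{T}$ of terms, $K_z\mathcal{T}:=\bigwedge_{t\in\mathcal{T}}K_zt$. The formulas $\mathsf{D}^n t_1t_2$ are defined by $\mathsf{D}^0t_1t_2:=t_1\equiv t_2$ and $\mathsf{D}^{n+1}t_1t_2:=\mathsf{D}^nt_1t_2\lor\bigvee_{t\in \mathsf{Term}}(\mathsf{D}^nt_1t\land(Rtt_2\lor Rt_2t))$. A model is $M=(\mathbf{D},\mathbf{I},\Sigma,\sim)$ where $\mathbf{D}$ is a nonempty finite set; $\mathbf{I}$ assigns to each $m$-ary $P$ a relation $\mathbf{I}(P)\subseteq\mathbf{D}^m$,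 with $\mathbf{R}:=\mathbf{I}(R)$ serial (every $s\in\mathbf{D}$ has some $t$ with $(s,t)\in\mathbf{R}$), and to each $c\in Cons$ an element $\mathbf{I}(c)\in\mathbf{D}$ such that every element of $\mathbf{D}$ is $\mathbf{I}(c)$ for some $c$; $\Sigma\subseteq\mathbf{D}^{Var}$ is a nonempty set of assignments (situations); $\sim_x,\sim_y$ are equivalence relations on $\Sigma$. For $s\in\mathbf{D}$ let $\mathbb{D}^0(s)=\{s\}$ and $\mathbb{D}^{m+1}(s)=\mathbb{D}^m(s)\cup\{t\in\mathbf{D}:\exists u\in\mathbb{D}^m(s),\ (u,t)\in\mathbf{R}\text{ or }(t,u)\in\mathbf{R}\}$. $M$ is a $k$-sight model if whenever $z\in Var$, $\sigma,\sigma'\in\Sigma$, $\sigma\sim_z\sigma'$, then $\sigma(z')=\sigma'(z')$ for every $z'\in Var$ with $\sigma(z')\in\mathbb{D}^k(\sigma(z))$. Semantics: $t^{(\mathbf{I},\sigma)}$ is $\mathbf{I}(t)$ for a constant and $\sigma(t)$ for a variable. $M,\sigma\models P(t_1,\dots,t_m)$ iff $(t_1^{(\mathbf{I},\sigma)},\dots,t_m^{(\mathbf{I},\sigma)})\in\mathbf{I}(P)$; $M,\sigma\models t_1\equiv t_2$ iff $t_1^{(\mathbf{I},\sigma)}=t_2^{(\mathbf{I},\sigma)}$; Boolean clauses as usual; $M,\sigma\models K_zt$ iff $t^{(\mathbf{I},\sigma)}=t^{(\mathbf{I},\sigma')}$ for all $\sigma'\in\Sigma$ with $\sigma'\sim_z\sigma$;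 $M,\sigma\models K_z\varphi$ iff $M,\sigma'\models\varphi$ for all $\sigma'\in\Sigma$ with $\sigma'\sim_z\sigma$. A formula is valid (w.r.t. $k$-sight models) if it is true at every situation of every $k$-sight model. *)

From mathcomp Require Import all_boot.
Set Implicit Arguments.
Unset Strict Implicit.
Unset Printing Implicit Defensive.

Record Vocab := {
  Pred : Type;
  arity : Pred -> nat;
  RP : Pred;
  RP_bin : arity RP = 2;
  Cons : finType;
  cons0 : Cons
}.

Inductive Var := vx | vy.

Section Syntax.
Variable V : Vocab.

Inductive Term := TC of Cons V | TV of Var.

Definition allTerms : seq Term := map TC (enum (Cons V)) ++ [:: TV vx; TV vy].

(* static fragment of the language; the dynamic operator [z]phi is not
   needed for the statement and is omitted *)
Inductive form :=
| Atom of Pred V & seq Term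
| Eq of Term & Term
| Neg of form
| And of form & form
| Kt of Var & Term
| Kf of Var & form.

Definition Top : form := Eq (TV vx) (TV vx).
Definition Bot : form := Neg Top.
Definition Or (a b : form) : form := Neg (And (Neg a) (Neg b)).
Definition Imp (a b : form) : form := Neg (And a (Neg b)).
Definition bigAnd (l : seq form) : form := foldr And Top l.
Definition bigOr (l : seq form) : form := foldr Or Bot l.

(* K_z T := /\_{t in T} K_z t, for a (finite) set of terms given as a list *)
Definition KtSet (z : Var) (T : seq Term) : form := bigAnd (map (Kt z) T).

Definition Rat (t1 t2 : Term) : form := Atom (RP V) [:: t1; t2].

Fixpoint Dn (n : nat) (t1 t2 : Term) : form :=
  match n with
  | 0 => Eq t1 t2
  | n'.+1 => Or (Dn n' t1 t2)
               (bigOr [seq And (Dn n' t1 t) (Or (Rat t t2) (Rat t2 t)) | t <- allTerms])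
  end.
End Syntax.

Record model (V : Vocab) := {
  Dom : finType;
  dom0 : Dom;
  IP : Pred V -> seq Dom -> Prop;
  IP_arity : forall P l, IP P l -> size l = arity P;
  Rrel : Dom -> Dom -> Prop := fun s t => IP (RP V) [:: s; t];
  R_serial : forall s, exists t, Rrel s t;
  IC : Cons V -> Dom;
  IC_surj : forall d, exists c, IC c = d;
  Sigma : (Var -> Dom) -> Prop;
  Sigma_ne : exists s, Sigma s;
  sim : Var -> (Var -> Dom) -> (Var -> Dom) -> Prop;
  sim_refl : forall z s, Sigma s -> sim z s s;
  sim_sym : forall z s s', Sigma s -> Sigma s' -> sim z s s' -> sim z s' s;
  sim_trans : forall z s1 s2 s3, Sigma s1 -> Sigma s2 -> Sigma s3 ->
                sim z s1 s2 -> sim z s2 s3 -> sim z s1 s3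
}.

Section Semantics.
Variables (V : Vocab) (M : model V).

(* 𝔻^m(s) as a predicate: Dball m s t  <->  t ∈ 𝔻^m(s) *)
Fixpoint Dball (m : nat) (s t : Dom M) : Prop :=
  match m with
  | 0 => t = s
  | m'.+1 => Dball m' s t \/
             exists u, Dball m' s u /\ (@Rrel V M u t \/ @Rrel V M t u)
  end.

Definition ksight (k : nat) : Prop :=
  forall (z : Var) (s s' : Var -> Dom M), @Sigma V M s -> @Sigma V M s' -> @sim V M z s s' ->
  forall z' : Var, Dball k (s z) (s z') -> s z' = s' z'.

Definition teval (s : Var -> Dom M) (t : Term V) : Dom M :=
  match t with TC c => @IC V M c | TV v => s v end.

Fixpoint sat (s : Var -> Dom M) (f : form V) : Prop :=
  match f with
  | Atom P ts => @IP V M P (map (teval s) ts)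
  | Eq t1 t2 => teval s t1 = teval s t2
  | Neg g => ~ sat s g
  | And g h => sat s g /\ sat s h
  | Kt z t => forall s', @Sigma V M s' -> @sim V M z s' s -> teval s t = teval s' t
  | Kf z g => forall s', @Sigma V M s' -> @sim V M z s' s -> sat s' g
  end.
End Semantics.

Definition valid_ksight (V : Vocab) (k : nat) (f : form V) : Prop :=
  forall M : model V, ksight M k -> forall s, @Sigma V M s -> sat s f.

From Stdlib Require Lists.List.
From Stdlib Require Import Classical.
From mathcomp Require Import all_boot.

(* Unfolding [D^k z t] at [s] puts the value of [t] in the k-ball around the
   position [s z] of agent [z].  So either [t] is a constant, whose value is
   rigid, or a variable whose value the k-sight condition forces to be the
   same in every situation [z] cannot tell apart from [s].  An atom only
   depends on the values of its arguments, so once [z] knows all of them the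
   atom holds throughout the [z]-class of [s]. *)

Lemma map_ext_In (A B : Type) (f g : A -> B) (l : seq A) :
  (forall a, List.In a l -> f a = g a) -> map f l = map g l.
Proof.
elim: l => [|a l IHl] //= fg.
rewrite fg /=; last by left.
by rewrite IHl // => b lb; apply: fg; right.
Qed.

Section Satisfaction.
Variables (V : Vocab) (M : model V).
Implicit Types (s : Var -> Dom M) (a b : form V) (l : seq (form V)).

Lemma sat_Or s a b : sat s (Or a b) -> sat s a \/ sat s b.
Proof.
move=> /= nab; apply: NNPP => nanb.
by apply: nab; split=> ?; apply: nanb; [left | right].
Qed.

Lemma sat_bigOr s l : sat s (bigOr l) -> exists2 f, List.In f l & sat s f.
Proof.
elim: l => [|a l IHl] /=; first by case.
case/sat_Or=> [sa | /IHl [f lf sf]]; first by exists a; [left |].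
by exists f; [right |].
Qed.

Lemma sat_KtSet s z (T : seq (Term V)) :
  sat s (KtSet z T) -> forall t, List.In t T -> sat s (Kt z t).
Proof.
elim: T => [|u T IHT] //= [su sT] t [<- | tT] //.
exact: IHT.
Qed.

Lemma sat_Dn_Dball n s (t1 t2 : Term V) :
  sat s (Dn n t1 t2) -> Dball n (teval s t1) (teval s t2).
Proof.
elim: n t2 => [|n IHn] t2 /=; first by move->.
case/sat_Or=> [/IHn | /sat_bigOr [f /List.in_map_iff [t [<- _]] [s1t st]]].
  by left.
right; exists (teval s t); split; first exact: IHn.
by case: (@sat_Or _ (Rat t t2) (Rat t2 t) st); [left | right].
Qed.

Lemma ksight_Kt k z s (t : Term V) :
  ksight M k -> Sigma s -> Dball k (s z) (teval s t) -> sat s (Kt z t).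
Proof.
move=> kM Ss; case: t => [c | z'] //= szz' s' Ss' s's.
exact: kM (sim_sym Ss' Ss s's) z' szz'.
Qed.

Lemma Kf_Atom_of_KtSet z s P (ts T : seq (Term V)) :
  (forall t, List.In t ts -> List.In t T) ->
  sat s (KtSet z T) -> sat s (Atom P ts) -> sat s (Kf z (Atom P ts)).
Proof.
move=> tsT /sat_KtSet zT /= sP s' Ss' s's.
suff -> : map (teval s') ts = map (teval s) ts by [].
by apply: map_ext_In => t /tsT /zT /(_ s' Ss' s's).
Qed.

End Satisfaction.

Theorem fact2 (V : Vocab) (k : nat) :
  (forall (z : Var) (t : Term V),
      valid_ksight k (Imp (Dn k (TV V z) t) (Kt z t)))
  /\
  (forall (z : Var) (P : Pred V) (ts : seq (Term V)) (T : seq (Term V)),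
      size ts = arity P ->
      (forall t, Stdlib.Lists.List.In t ts -> Stdlib.Lists.List.In t T) ->
      valid_ksight k (Imp (And (KtSet z T) (Atom P ts)) (Kf z (Atom P ts)))).
Proof.
split.
- move=> z t M kM s Ss /= [/sat_Dn_Dball zt]; apply.
  exact: ksight_Kt kM Ss zt.
- move=> z P ts T _ tsT M kM s Ss /= [[zT sP]]; apply.
  exact: Kf_Atom_of_KtSet tsT zT sP.
Qed.
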